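(* Let $(\pi_h^k)_{k\ge 0}$ be the sequence of joint safety policies produced by the multi-agent safety policy iteration (defined in the context) from an arbitrary initial joint policy $\pi_h^0$, with an arbitrary ordering of the agents chosen at each iteration. Then: (a) for every $x\in\mathcal X$ and every $k\ge0$, $V_h^{\pi_h^{k+1}}(x)\ge V_h^{\pi_h^{k}}(x)$, and the sequence $(V_h^{\pi_h^k})_k$ converges; (b) under the tie-breaking convention in the context, the joint safety policies $\pi_h^k$ converge, i.e. are constant from some index on, to a joint policy $\pi_h^*=(\pi_{h,1}^*,\dots,\pi_{h,n}^* )$. This limit is a Nash equilibrium for the safety value function: for every agent $i\in\mathcal N$, every individual policy $\pi_{h,i}:\mathcal X\to\mathcal U_i$ and every $x\in\mathcal X$, $$V_h^{(\pi_{h,i},\pi^*_{h,-i})}(x)\le V_h^{\pi_h^*}(x).$$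
   Context: Setting. Let $\mathcal N=\{1,\dots,n\}$ be a finite set of agents, $\mathcal X$ a finite state space, $\mathcal U_i$ a finite action set for agent $i$, $\mathcal U=\prod_{i=1}^n\mathcal U_i$ the joint action space, $f:\mathcal X\times\mathcal U\to\mathcal X$ the deterministic dynamics, $h:\mathcal X\to\mathbb R$ a constraint function, and $\gamma_h\in(0,1)$ a safety discount factor. An individual policy of agent $i$ is a map $\pi_i:\mathcal X\to\mathcal U_i$. A joint policy is $\pi=(\pi_1,\dots,\pi_n)$, with $\pi(x)=(\pi_1(x),\dots,\pi_n(x))$. For a joint action $u$ and an agent $i$, $(u_i',u_{-i})$ denotes $u$ with its $i$-th component replaced by $u_i'$. The notation $(\pi_i',\pi_{-i})$ is used in the same way for policies. Safety value function. For a joint policy $\pi$, set $V_h^{\pi}(x)=\min_{t\in\mathbb N}\gamma_h^{t+1}h(x_t)$, where $x_0=x$ and $x_{t+1}=f(x_t,\pi(x_t))$. Multi-agent safety policy iteration. Given $\pi_h^k$, compute $V_h^{\pi_h^k}$ and choose an ordering $i_1,\dots,i_n$ of $\mathcal N$. Then, for each $x\in\mathcal X$ and for $j=1,\dots,n$ in turn, set $$\pi_{h,i_j}^{k+1}(x)\in\arg\max_{v\in\mathcal U_{i_j}}V_h^{\pi_h^k}\big(f(x,w^{(j)})\big),$$ where $w^{(j)}\in\mathcal U$ is the joint action with component $i_j$ equal to $v$, component $i_l$ equal to $\pi_{h,i_l}^{k+1}(x)$ for $l<j$, and component $i_l$ equal to $\pi_{h,i_l}^{k}(x)$ for $l>j$.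 Tie-breaking convention. In every argmax, if the agent's current action ($\pi^k_{h,i_j}(x)$ here) is a maximizer, it is selected. Otherwise, a maximizer is selected by a fixed deterministic rule. *)

From HB Require Import structures.
From mathcomp Require Import all_boot all_order all_algebra all_fingroup.
From mathcomp Require Import all_classical all_reals all_analysis.
Set Implicit Arguments. Unset Strict Implicit. Unset Printing Implicit Defensive.
Import Order.TTheory GRing.Theory Num.Theory.
Local Open Scope ring_scope.
Local Open Scope classical_set_scope.

Section MASafety.
Variables (R : realType) (n : nat) (X : finType) (U : 'I_n -> finType).

Definition jaction := forall i : 'I_n, U i.
Definition jpolicy := forall i : 'I_n, X -> U i.

Variables (f : X -> jaction -> X) (h : X -> R) (gam : R).

Definition jact (pi : jpolicy) (x : X) : jaction := fun i => pi i x.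

Definition traj (pi : jpolicy) (x : X) (t : nat) : X :=
  iter t (fun y => f y (jact pi y)) x.

Definition Vh (pi : jpolicy) (x : X) : R :=
  inf (range (fun t : nat => gam ^+ t.+1 * h (traj pi x t))).

(* the joint action w^(j) (with component i_j = s j equal to v), where
   s j is the j-th agent of the ordering, pi' the new and pi the old policy *)
Definition wj (s : {perm 'I_n}) (pi pi' : jpolicy) (x : X) (j : 'I_n)
  (v : U (s j)) : jaction :=
  @dfwith _ U (fun m => if ((s^-1)%g m < j)%N then pi' m x else pi m x) (s j) v.

Definition argmax_set (V : X -> R) (s : {perm 'I_n}) (pi pi' : jpolicy)
  (x : X) (j : 'I_n) : {set U (s j)} :=
  [set v | [forall v', V (f x (@wj s pi pi' x j v')) <= V (f x (@wj s pi pi' x j v))]].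

Definition mspi_step (s : {perm 'I_n}) (pi pi' : jpolicy) : Prop :=
  forall x j, pi' (s j) x \in argmax_set (Vh pi) s pi pi' x j.

Definition tiebreak_rule (tb : forall i : 'I_n, {set U i} -> U i) : Prop :=
  forall i (S : {set U i}), S != finset.set0 -> tb i S \in S.

Definition mspi_step_tb (tb : forall i : 'I_n, {set U i} -> U i)
  (s : {perm 'I_n}) (pi pi' : jpolicy) : Prop :=
  forall x j,
    let M := argmax_set (Vh pi) s pi pi' x j in
    pi' (s j) x = (if pi (s j) x \in M then pi (s j) x else tb (s j) M).

Definition unilateral (pi : jpolicy) (i : 'I_n) (p : X -> U i) : jpolicy :=
  @dfwith _ (fun m => X -> U m) pi i p.

End MASafety.

From HB Require Import structures.
From mathcomp Require Import all_boot all_order all_algebra all_fingroup.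
From mathcomp Require Import all_classical all_reals all_analysis.
From mathcomp Require Import lra.
Set Implicit Arguments. Unset Strict Implicit. Unset Printing Implicit Defensive.
Import Order.TTheory GRing.Theory Num.Theory.
Import numFieldNormedType.Exports.
Local Open Scope ring_scope.
Local Open Scope classical_set_scope.

(* The safety value satisfies the Bellman equation
   V^pi(x) = min (gam h(x), gam V^pi(f(x, pi x))), and because gam < 1 it is
   the only bounded solution: sub-solutions lie below V^pi, super-solutions
   above it. Sequential maximization agent by agent never decreases
   V^pi(f(x, .)), so V^pi itself is a sub-solution for V^pi' and the values
   increase. Values and successor values are functions of the policy, and
   there are finitely many policies, so both monotone sequences become
   stationary; after that no agent can have a non-maximizing action (it
   would strictly increase the successor value), so the tie-breaking rule
   keeps every action. At the limit every agent plays a best response, which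
   makes V^pi* a super-solution for every unilateral deviation. *)

Lemma normr_le_sum (T : finType) (K : numDomainType) (g : T -> K) y :
  `|g y| <= \sum_z `|g z|.
Proof.
by rewrite (bigD1 y) //= lerDl sumr_ge0 // => z _; apply: normr_ge0.
Qed.

Lemma dfwith_self (I : eqType) (T : I -> Type) (g : forall i, T i) i :
  dfwith g i (g i) = g.
Proof. by apply: functional_extensionality_dep => j; case: dfwithP. Qed.

Lemma nondecreasing_fin_range_stationary d (T : porderType d) (P : finType)
    (g : P -> T) (a : nat -> T) :
  (forall k, (a k <= a k.+1)%O) -> (forall k, exists p, a k = g p) ->
  exists K, forall k, (K <= k)%N -> a k = a K.
Proof.
move=> a_incr a_fin.
have a_mono := homo_leq (@lexx _ T) (@le_trans _ T) a_incr.
pose below k := #|[pred p | (g p <= a k)%O]|.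
have below_ex : exists c, `[< exists k, below k = c >] by exists (below 0); apply/asboolP; exists 0.
have below_ub c : `[< exists k, below k = c >] -> (c <= #|P|)%N.
  by move=> /asboolP[k <-]; apply: max_card.
(* [a] cannot increase past an index where the number of values below it is maximal *)
case: (ex_maxnP below_ex below_ub) => _ /asboolP[K <-] below_max.
exists K => k Kk; apply/le_anti/andP; split; last exact: a_mono.
have [p akp] := a_fin k; rewrite akp; apply: contraT => gpK.
have : (below K < below k)%N.
  apply/proper_card/fintype.properP; split.
    by apply/fintype.subsetP => q; rewrite !inE => /le_trans; apply; apply: a_mono.
  by exists p; rewrite inE /= ?akp.
by rewrite ltnNge below_max //; apply/asboolP; exists k.
Qed.

Section MultiAgentSafety.
Variables (R : realType) (n : nat) (X : finType) (U : 'I_n -> finType).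
Variables (f : X -> jaction U -> X) (h : X -> R) (gam : R).

Local Notation next pi x := (f x (jact pi x)).

Lemma policy_image_stationary d (T : porderType d) (F : jpolicy X U -> T)
    (pis : nat -> jpolicy X U) :
  (forall k, (F (pis k) <= F (pis k.+1))%O) ->
  exists K, forall k, (K <= k)%N -> F (pis k) = F (pis K).
Proof.
move=> F_incr; pose P := {dffun forall i : 'I_n, {ffun X -> U i}}.
apply: (@nondecreasing_fin_range_stationary _ _ P (fun p => F (fun i y => p i y))).
  exact: F_incr.
move=> k; exists [ffun i => [ffun y => pis k i y]]; congr F.
by apply: functional_extensionality_dep => i; apply/funext => y; rewrite !ffunE.
Qed.

Section SequentialUpdate.
Variables (W : X -> R) (s : {perm 'I_n}) (pi pi' : jpolicy X U) (x : X).

Definition mixed_action (m : nat) : jaction U :=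
  fun i => if ((s^-1)%g i < m)%N then pi' i x else pi i x.

Lemma mixed_action0 : mixed_action 0 = jact pi x.
Proof. by apply: functional_extensionality_dep => i; rewrite /mixed_action ltn0. Qed.

Lemma mixed_action_ge m : (n <= m)%N -> mixed_action m = jact pi' x.
Proof.
move=> nm; apply: functional_extensionality_dep => i.
by rewrite /mixed_action (leq_trans (ltn_ord _) nm).
Qed.

Lemma wj_current (j : 'I_n) : wj pi pi' x (pi (s j) x) = mixed_action j.
Proof.
apply: functional_extensionality_dep => i; rewrite /wj.
by case: dfwithP => [|i' _]; rewrite // /mixed_action permK ltnn.
Qed.

Lemma wj_updated (j : 'I_n) : wj pi pi' x (pi' (s j) x) = mixed_action j.+1.
Proof.
apply: functional_extensionality_dep => i; rewrite /wj.
case: dfwithP => [|i' i'_neq]; first by rewrite /mixed_action permK ltnSn.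
rewrite /mixed_action ltnS (leq_eqVlt ((s^-1)%g i')); case: eqP => //= rank_j.
by move: i'_neq; rewrite -(ord_inj rank_j) permKV eqxx.
Qed.

Hypothesis pi'_max : forall j, pi' (s j) x \in argmax_set f W s pi pi' x j.

Lemma mixed_action_le_succ m :
  W (f x (mixed_action m)) <= W (f x (mixed_action m.+1)).
Proof.
case: (ltnP m n) => [mn|nm]; last by rewrite !mixed_action_ge // leqW.
have := pi'_max (Ordinal mn); rewrite inE => /forallP/(_ (pi (s (Ordinal mn)) x)).
by rewrite wj_current wj_updated.
Qed.

Lemma mixed_action_mono m m' :
  (m <= m')%N -> W (f x (mixed_action m)) <= W (f x (mixed_action m')).
Proof. exact: (homo_leq (@lexx _ R) (@le_trans _ R) mixed_action_le_succ). Qed.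

Lemma sequential_update_le : W (next pi x) <= W (next pi' x).
Proof. by rewrite -mixed_action0 -(mixed_action_ge (leqnn n)); apply: mixed_action_mono. Qed.

Lemma sequential_update_lt j :
  pi (s j) x \notin argmax_set f W s pi pi' x j -> W (next pi x) < W (next pi' x).
Proof.
rewrite inE negb_forall => /existsP[v]; rewrite -ltNge wj_current => lt_v.
have v_le : W (f x (wj pi pi' x v)) <= W (f x (mixed_action j.+1)).
  by have := pi'_max j; rewrite inE => /forallP/(_ v); rewrite wj_updated.
rewrite -mixed_action0 -(mixed_action_ge (leqnn n)).
apply: le_lt_trans (mixed_action_mono (leq0n j)) _.
exact: lt_le_trans lt_v (le_trans v_le (mixed_action_mono (ltn_ord j))).
Qed.

End SequentialUpdate.

Lemma argmax_set_neq0 (W : X -> R) s (pi pi' : jpolicy X U) x j :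
  argmax_set f W s pi pi' x j != finset.set0.
Proof.
have [v _ v_max] := @arg_maxP _ _ _ (pi (s j) x) xpredT
  (fun v => W (f x (wj pi pi' x v))) isT.
by apply/set0Pn; exists v; rewrite inE; apply/forallP => v'; apply: v_max.
Qed.

Lemma wj_fixed (s : {perm 'I_n}) (pi : jpolicy X U) x (j : 'I_n) (v : U (s j)) :
  wj (j := j) pi pi x v = @dfwith _ U (jact pi x) (s j) v.
Proof.
rewrite /wj; congr (@dfwith _ U _ _ v).
by apply: functional_extensionality_dep => i; rewrite if_same.
Qed.

Lemma jact_unilateral (pi : jpolicy X U) i (p : X -> U i) y :
  jact (unilateral pi p) y = @dfwith _ U (jact pi y) i (p y).
Proof.
apply: functional_extensionality_dep => m; rewrite /jact /unilateral /dfwith.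
by case: eqP => // e; case: m / e.
Qed.

Hypotheses (gam_gt0 : 0 < gam) (gam_lt1 : gam < 1).

Local Notation Vh := (Vh f h gam).
Local Notation traj := (traj f).

Lemma le_add_geometric (a b K : R) : (forall m, a <= b + gam ^+ m * K) -> a <= b.
Proof.
move=> a_le; have gam_norm : `|gam| < 1 by rewrite (ger0_norm (ltW gam_gt0)).
have geo_cvg : (fun m => b + gam ^+ m * K) @ \oo --> b.
  rewrite -[X in _ --> X]addr0; apply: cvgD; first exact: cvg_cst.
  by rewrite -(mul0r K); apply: cvgM; [apply: cvg_expr | apply: cvg_cst].
rewrite -(cvg_lim _ geo_cvg) //; apply: limr_ge; first exact: cvgP geo_cvg.
exact: nearW.
Qed.

Local Notation hsum := (\sum_y `|h y|).

Lemma norm_term_le pi x t : `|gam ^+ t.+1 * h (traj pi x t)| <= hsum.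
Proof.
rewrite normrM normrX (ger0_norm (ltW gam_gt0)).
apply: le_trans (ler_piMl (normr_ge0 _) _) (normr_le_sum h _).
by apply: exprn_ile1; apply: ltW.
Qed.

Lemma Vh_lbound pi x :
  has_lbound (range (fun t => gam ^+ t.+1 * h (traj pi x t))).
Proof.
exists (- hsum) => _ [t _ <-].
by have := norm_term_le pi x t; rewrite ler_norml => /andP[].
Qed.

Lemma Vh_le_term pi x t : Vh pi x <= gam ^+ t.+1 * h (traj pi x t).
Proof. by apply: (ge_inf (Vh_lbound pi x)); exists t. Qed.

Lemma Vh_ge pi x c :
  (forall t, c <= gam ^+ t.+1 * h (traj pi x t)) -> c <= Vh pi x.
Proof.
move=> c_le; apply: lb_le_inf; first by exists (gam ^+ 1 * h (traj pi x 0)), 0%N.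
by move=> _ [t _ <-]; apply: c_le.
Qed.

Lemma traj_succ pi x t : traj pi x t.+1 = traj pi (next pi x) t.
Proof. by rewrite /traj iterSr. Qed.

Lemma Vh_bellman pi x : Vh pi x = Num.min (gam * h x) (gam * Vh pi (next pi x)).
Proof.
apply/le_anti/andP; split.
  rewrite le_min; apply/andP; split; first by have := Vh_le_term pi x 0; rewrite expr1.
  rewrite -ler_pdivrMl //; apply: Vh_ge => t.
  by rewrite ler_pdivrMl // mulrA -exprS -traj_succ; apply: Vh_le_term.
apply: Vh_ge => -[|t]; first by rewrite expr1 ge_min lexx.
rewrite ge_min; apply/orP; right.
by rewrite exprS -mulrA traj_succ ler_pM2l //; apply: Vh_le_term.
Qed.

Lemma subsolution_le_Vh pi (W : X -> R) :
  (forall x, W x <= Num.min (gam * h x) (gam * W (next pi x))) ->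
  forall x, W x <= Vh pi x.
Proof.
move=> W_sub x; apply: Vh_ge => t; elim: t x => [|t IH] x;
  have := W_sub x; rewrite le_min => /andP[W_h W_next]; first by rewrite expr1.
by rewrite traj_succ exprS -mulrA; apply: le_trans W_next _; rewrite ler_pM2l.
Qed.

Lemma Vh_le_supersolution pi (W : X -> R) :
  (forall x, Num.min (gam * h x) (gam * W (next pi x)) <= W x) ->
  forall x, Vh pi x <= W x.
Proof.
move=> W_super; pose K := hsum + \sum_y `|W y|.
have K_ge0 : 0 <= K by rewrite addr_ge0 // sumr_ge0.
suff Vh_le m x : Vh pi x <= W x + gam ^+ m * K by move=> x; apply: le_add_geometric.
elim: m x => [|m IH] x.
  have Vh_le_hsum : Vh pi x <= hsum.
    exact: le_trans (Vh_le_term pi x 0) (le_trans (ler_norm _) (norm_term_le pi x 0)).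
  have W_ge : - \sum_y `|W y| <= W x.
    by have := normr_le_sum W x; rewrite ler_norml => /andP[].
  rewrite expr0 mul1r /K; lra.
have gmK_ge0 : 0 <= gam ^+ m.+1 * K by rewrite mulr_ge0 // exprn_ge0 // ltW.
have := W_super x; rewrite ge_min => /orP[h_le|next_le].
  apply: le_trans (Vh_le_term pi x 0) _; rewrite expr1.
  by apply: le_trans h_le _; rewrite lerDl.
rewrite (Vh_bellman pi x) ge_min; apply/orP; right.
apply: le_trans (ler_wpM2l (ltW gam_gt0) (IH _)) _.
by rewrite mulrDr exprS mulrA lerD2r.
Qed.

Lemma mspi_step_improves s (pi pi' : jpolicy X U) :
  mspi_step f h gam s pi pi' -> forall x, Vh pi x <= Vh pi' x.
Proof.
move=> step; apply: subsolution_le_Vh => x.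
rewrite {1}Vh_bellman le_min2 // ler_pM2l //; exact: sequential_update_le (step x).
Qed.

Lemma mspi_values_cvg (pis : nat -> jpolicy X U) (ord : nat -> {perm 'I_n}) :
  (forall k, mspi_step f h gam (ord k) (pis k) (pis k.+1)) ->
  forall x, exists l : R, (fun k => Vh (pis k) x) @ \oo --> l.
Proof.
move=> step x; exists (sup (range (fun k => Vh (pis k) x))).
apply: nondecreasing_cvgn.
  apply: homo_leq (@lexx _ R) (@le_trans _ R) _ => k; exact: (mspi_step_improves (step k) x).
by exists (gam * h x) => _ [k _ <-]; rewrite Vh_bellman ge_min lexx.
Qed.

Lemma best_response_nash (pi : jpolicy X U) i :
  (forall y (v : U i), Vh pi (f y (@dfwith _ U (jact pi y) i v)) <= Vh pi (next pi y)) ->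
  forall (p : X -> U i) x, Vh (unilateral pi p) x <= Vh pi x.
Proof.
move=> best p; apply: Vh_le_supersolution => x.
by rewrite [leRHS]Vh_bellman le_min2 // ler_pM2l // jact_unilateral best.
Qed.

Lemma fixed_mspi_step_best_response s (pi : jpolicy X U) :
  mspi_step f h gam s pi pi ->
  forall i y (v : U i), Vh pi (f y (@dfwith _ U (jact pi y) i v)) <= Vh pi (next pi y).
Proof.
move=> step i y; rewrite -(permKV s i) => v.
have := step y ((s^-1)%g i); rewrite inE => /forallP/(_ v).
by rewrite !wj_fixed (dfwith_self (jact pi y)).
Qed.

Section TieBreaking.
Variables (tb : forall i : 'I_n, {set U i} -> U i) (tbP : tiebreak_rule tb).

Lemma mspi_step_tb_step s (pi pi' : jpolicy X U) :
  mspi_step_tb f h gam tb s pi pi' -> mspi_step f h gam s pi pi'.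
Proof.
move=> step x j; rewrite (step x j) /=.
by case: ifP => // _; apply: tbP; apply: argmax_set_neq0.
Qed.

(* a changed action is never a maximizer, so it strictly raises a successor value *)
Lemma mspi_step_tb_stationary s (pi pi' : jpolicy X U) :
  mspi_step_tb f h gam tb s pi pi' ->
  (forall x, Vh pi (next pi' x) <= Vh pi (next pi x)) -> pi' = pi.
Proof.
move=> step no_gain; apply: functional_extensionality_dep => i; apply/funext => x.
rewrite -(permKV s i); have := step x ((s^-1)%g i) => /=; case: ifP => // not_max _.
have := sequential_update_lt (mspi_step_tb_step step x) (negbT not_max).
by rewrite ltNge no_gain.
Qed.

Lemma mspi_tb_eventually_constant (pis : nat -> jpolicy X U) (ord : nat -> {perm 'I_n}) :
  (forall k, mspi_step_tb f h gam tb (ord k) (pis k) (pis k.+1)) ->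
  exists K, forall k, (K <= k)%N -> pis k = pis K.
Proof.
move=> step.
have improves k := mspi_step_improves (mspi_step_tb_step (step k)).
have [K1 V_const] := policy_image_stationary (fun k => introT (lefP _ _) (improves k)).
pose next_value pi x := Vh (pis K1) (next pi x).
have [K2 next_const] : exists K2, forall m, (K2 <= m)%N ->
    next_value (pis (K1 + m)%N) = next_value (pis (K1 + K2)%N).
  apply: (policy_image_stationary (pis := fun m => pis (K1 + m)%N)) => m.
  apply/lefP => x; rewrite /next_value addnS -(V_const (K1 + m)%N) ?leq_addr //.
  exact: sequential_update_le (mspi_step_tb_step (step _) x).
have fixed m : (K2 <= m)%N -> pis (K1 + m).+1 = pis (K1 + m)%N.
  move=> K2m; apply: (mspi_step_tb_stationary (step _)) => x.
  rewrite V_const ?leq_addr //.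
  change (next_value (pis (K1 + m).+1) x <= next_value (pis (K1 + m)%N) x).
  by rewrite -addnS !next_const ?(leqW K2m).
exists (K1 + K2)%N => k /subnKC <-; elim: (k - _)%N => [|d IH]; first by rewrite addn0.
by rewrite addnS -addnA fixed ?leq_addr // addnA.
Qed.

End TieBreaking.

End MultiAgentSafety.

Theorem theorem1 (R : realType) (n : nat) (X : finType) (U : 'I_n -> finType)
  (f : X -> jaction U -> X) (h : X -> R) (gam : R) :
  0 < gam < 1 ->
  (forall (pis : nat -> jpolicy X U) (ord : nat -> {perm 'I_n}),
     (forall k, mspi_step f h gam (ord k) (pis k) (pis k.+1)) ->
     (forall k x, Vh f h gam (pis k) x <= Vh f h gam (pis k.+1) x) /\
     (forall x, exists l : R, (fun k => Vh f h gam (pis k) x) @ \oo --> l))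
  /\
  (forall (tb : forall i : 'I_n, {set U i} -> U i), tiebreak_rule tb ->
   forall (pis : nat -> jpolicy X U) (ord : nat -> {perm 'I_n}),
     (forall k, mspi_step_tb f h gam tb (ord k) (pis k) (pis k.+1)) ->
     exists (pistar : jpolicy X U) (K : nat),
       (forall k, (K <= k)%N -> forall i x, pis k i x = pistar i x) /\
       (forall (i : 'I_n) (p : X -> U i) (x : X),
          Vh f h gam (unilateral pistar p) x <= Vh f h gam pistar x)).
Proof.
case/andP => gam_gt0 gam_lt1; split.
  move=> pis ord step; split => [k x|x].
    exact: (mspi_step_improves gam_gt0 gam_lt1 (step k) x).
  exact: (mspi_values_cvg gam_gt0 gam_lt1 step x).
move=> tb tbP pis ord step.
have [K pis_const] := mspi_tb_eventually_constant gam_gt0 gam_lt1 tbP step.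
have fixed_step : mspi_step f h gam (ord K) (pis K) (pis K).
  by have := mspi_step_tb_step tbP (step K); rewrite pis_const.
exists (pis K), K; split => [k Kk i x|i p x]; first by rewrite pis_const.
exact: (best_response_nash gam_gt0 gam_lt1
  (fixed_mspi_step_best_response fixed_step (i := i)) p x).
Qed.
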